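(* Let $X$ be a finite-dimensional real Banach space with $\dim X\ge 2$. Then for every $t\in[0,1]$, $S_P(X)\ge \frac{\gamma_X(t)+t^2-3}{2+2t^2}$.
   Context: For a real Banach space $X$ with unit sphere $S_X$, the P-angle constant is $S_P(X)=\sup\left\{\frac{\|x+y\|^2+\|x-y\|^2-4}{2\|x+y\|\,\|x-y\|}: x,y\in S_X,\ x\neq \pm y\right\}$. For $t\in[0,1]$, $\gamma_X(t)=\sup\left\{\frac{\|x+ty\|^2+\|x-ty\|^2}{2}: x,y\in S_X\right\}$. *)

From HB Require Import structures.
From mathcomp Require Import all_boot all_order all_algebra.
From mathcomp Require Import all_classical all_reals all_analysis.
Set Implicit Arguments. Unset Strict Implicit. Unset Printing Implicit Defensive.
Import Order.TTheory GRing.Theory Num.Theory.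
Import numFieldNormedType.Exports.
Local Open Scope classical_set_scope.
Local Open Scope ring_scope.

Definition SP_const (R : realType) (X : normedModType R) : R :=
  sup [set r : R | exists x y : X,
        `|x| = 1 /\ `|y| = 1 /\ x <> y /\ x <> - y /\
        r = (`|x + y| ^+ 2 + `|x - y| ^+ 2 - 4) / (2 * `|x + y| * `|x - y|)].

Definition gammaX (R : realType) (X : normedModType R) (t : R) : R :=
  sup [set r : R | exists x y : X,
        `|x| = 1 /\ `|y| = 1 /\
        r = (`|x + t *: y| ^+ 2 + `|x - t *: y| ^+ 2) / 2].

From HB Require Import structures.
From mathcomp Require Import all_boot all_order all_algebra.
From mathcomp Require Import all_classical all_reals all_analysis.
From mathcomp Require Import ring lra.
Import Order.TTheory GRing.Theory Num.Theory.
Import numFieldNormedType.Exports.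
Local Open Scope ring_scope.

(* For unit vectors x, y put A = |x + y| and B = |x - y|; the definition of
   S = S_P(X) gives A^2 + B^2 - 4 <= 2 S A B (trivially when x = +-y, as then
   A B = 0).  Writing x +- t y as convex combinations of x + y and x - y gives
   |x + t y|^2 + |x - t y|^2 <= (1 + t^2)/2 (A^2 + B^2) + (1 - t^2) A B, and
   together with A B <= 4 this bounds gamma_X(t) by (2 + 2t^2) S - t^2 + 3,
   provided S >= 0.  Nonnegativity of S needs dim X >= 2: by continuity there is
   a unit y with |x + y| = |x - y|, and either (x, y) or its normalized rotation
   ((x + y)/A, (x - y)/A) has |u + v|^2 >= 2 together with |u + v| = |u - v|. *)

Section PAngle.
Context {R : realType} {X : normedModType R}.
Implicit Types (x y z : X) (t : R).

Definition indep2 x z := forall a b : R, a *: x + b *: z = 0 -> a = 0 /\ b = 0.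

Lemma indep2_neq0 x z : indep2 x z -> x != 0.
Proof.
move=> ind; apply/eqP => x0.
by have [] := ind 1 0; [rewrite x0 scaler0 scale0r addr0 | move/eqP; rewrite oner_eq0].
Qed.

Lemma indep2_scalel (c : R) x z : c != 0 -> indep2 x z -> indep2 (c *: x) z.
Proof.
move=> c0 ind a b; rewrite scalerA => /ind [/eqP ac0 ->]; split=> //; move: ac0.
by rewrite mulf_eq0 (negbTE c0) orbF => /eqP.
Qed.

Definition pangle x y :=
  (`|x + y| ^+ 2 + `|x - y| ^+ 2 - 4) / (2 * `|x + y| * `|x - y|).

Lemma pangle_le1 x y : `|y| = 1 -> pangle x y <= 1.
Proof.
move=> ny; rewrite /pangle; set A := `|x + y|; set B := `|x - y|.
have AB2 : `|A - B| <= 2.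
  have -> : 2 = `|(x + y) - (x - y)|.
    by rewrite opprB addrC addrA subrK -mulr2n normrMn ny.
  exact: ler_dist_dist.
have [->|A0] := eqVneq A 0; first by rewrite !mulr0 mul0r invr0 mulr0.
have [->|B0] := eqVneq B 0; first by rewrite !mulr0 invr0 mulr0.
rewrite ler_pdivrMr ?mul1r; last by rewrite !mulr_gt0 // lt0r ?A0 ?B0 normr_ge0.
by move: AB2; rewrite ler_norml; nra.
Qed.

Lemma pangle_le_SP x y : `|x| = 1 -> `|y| = 1 -> x <> y -> x <> - y ->
  pangle x y <= SP_const X.
Proof.
move=> nx ny xy xNy; apply: ub_le_sup; last by exists x, y.
by exists 1 => _ [u [v [_ [nv [_ [_ ->]]]]]]; exact: pangle_le1.
Qed.

Lemma normD_normB_le_SP x y : `|x| = 1 -> `|y| = 1 ->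
  `|x + y| ^+ 2 + `|x - y| ^+ 2 - 4 <= 2 * SP_const X * (`|x + y| * `|x - y|).
Proof.
move=> nx ny; have [<-|xy] := eqVneq x y.
  by rewrite subrr normr0 !mulr0 -mulr2n normrMn nx; lra.
have [xNy|xNy] := eqVneq x (- y).
  by rewrite xNy addNr normr0 !(mul0r, mulr0) -opprD normrN -mulr2n normrMn ny; lra.
have [A0 B0] : 0 < `|x + y| /\ 0 < `|x - y|.
  by rewrite !normr_gt0 subr_eq0 addr_eq0 xy xNy.
have -> : 2 * SP_const X * (`|x + y| * `|x - y|) =
          SP_const X * (2 * `|x + y| * `|x - y|) by ring.
by rewrite -ler_pdivrMr ?mulr_gt0 //; apply: pangle_le_SP => //; apply/eqP.
Qed.

Lemma norm_add_scale_le x y t : 0 <= t -> t <= 1 ->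
  `|x + t *: y| <= (1 + t) / 2 * `|x + y| + (1 - t) / 2 * `|x - y|.
Proof.
move=> t0 t1.
have -> : x + t *: y = ((1 + t) / 2) *: (x + y) + ((1 - t) / 2) *: (x - y).
  rewrite scalerDr scalerBr addrACA -scalerDl -scalerBl.
  have -> : (1 + t) / 2 + (1 - t) / 2 = 1 :> R by field.
  have -> : (1 + t) / 2 - (1 - t) / 2 = t :> R by field.
  by rewrite scale1r.
by rewrite (le_trans (ler_normD _ _)) // !normrZ !ger0_norm //; lra.
Qed.

Lemma sqr_norm_add_scale_le x y t : 0 <= t -> t <= 1 ->
  `|x + t *: y| ^+ 2 + `|x - t *: y| ^+ 2 <=
  (1 + t ^+ 2) / 2 * (`|x + y| ^+ 2 + `|x - y| ^+ 2) + (1 - t ^+ 2) * (`|x + y| * `|x - y|).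
Proof.
move=> t0 t1; have le_p := norm_add_scale_le x y t t0 t1.
have le_m := norm_add_scale_le x (- y) t t0 t1.
rewrite scalerN opprK in le_m.
have := normr_ge0 (x + t *: y); have := normr_ge0 (x - t *: y).
move: le_p le_m; set a := `|x + t *: y|; set b := `|x - t *: y|.
set A := `|x + y|; set B := `|x - y|; nra.
Qed.

Lemma gammaX_le_SP t : 0 <= SP_const X -> 0 <= t -> t <= 1 ->
  gammaX X t <= (2 + 2 * t ^+ 2) * SP_const X - t ^+ 2 + 3.
Proof.
move=> S0 t0 t1; rewrite /gammaX; set G := (X in sup X).
have [->|/set0P G0] := eqVneq G set0; first by rewrite sup0; nra.
apply: ge_sup => // _ [x [y [nx [ny ->]]]].
have le_xy := sqr_norm_add_scale_le x y t t0 t1.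
have le_S := normD_normB_le_SP x y nx ny.
have A2 : `|x + y| <= 2 by rewrite (le_trans (ler_normD _ _)) // nx ny; lra.
have B2 : `|x - y| <= 2 by rewrite (le_trans (ler_normB _ _)) // nx ny; lra.
move: le_xy le_S A2 B2 (normr_ge0 (x + y)) (normr_ge0 (x - y)).
set S := SP_const X; set A := `|x + y|; set B := `|x - y| => le_xy le_S A2 B2 A0 B0.
have AB4 : A * B <= 4 by nra.
have c0 : 0 <= (1 + t ^+ 2) * S + 1 - t ^+ 2.
  by rewrite -addrA addr_ge0 ?mulr_ge0 //; nra.
have le_xyS : `|x + t *: y| ^+ 2 + `|x - t *: y| ^+ 2 <=
    2 * (1 + t ^+ 2) + A * B * ((1 + t ^+ 2) * S + 1 - t ^+ 2).
  have := ler_wpM2l (_ : 0 <= (1 + t ^+ 2) / 2) le_S; nra.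
by rewrite ler_pdivrMr //; nra.
Qed.

Lemma continuous_normalize {T : topologicalType} {p : T -> X} :
  (forall s, p s != 0) -> continuous p -> continuous (fun s => `|p s|^-1 *: p s).
Proof.
move=> p0 pc s; apply: continuousZ (pc s).
by apply: continuousV; [rewrite normr_eq0 | apply: continuous_comp (pc s) _; exact: norm_continuous].
Qed.

Lemma exists_isosceles_unit x z : `|x| = 1 -> indep2 x z ->
  exists y, `|y| = 1 /\ `|x + y| = `|x - y|.
Proof.
move=> nx ind; pose p (s : R) := (1 - 2 * s) *: x + (s * (1 - s)) *: z.
(* As s runs over [0, 1], the normalized p s runs over the unit sphere of
   span(x, z) from x to -x, so |x + y| - |x - y| changes sign. *)
have p0 s : p s != 0.
  apply/eqP => /ind [h1 h2].
  have s2 : s = 1 / 2 by lra.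
  by move: h2; rewrite s2; lra.
have pc : continuous p.
  move=> s; apply: cvgD; apply: cvgZr_tmp.
    by apply: cvgB; [exact: cvg_cst | apply: cvgM; [exact: cvg_cst | exact: cvg_id]].
  by apply: cvgM; [exact: cvg_id | apply: cvgB; [exact: cvg_cst | exact: cvg_id]].
pose y s := `|p s|^-1 *: p s.
have yc : continuous y := continuous_normalize p0 pc.
pose h s := `|x + y s| - `|x - y s|.
have hc : continuous h.
  move=> s; apply: cvgB; apply: cvg_norm.
    by apply: cvgD; [exact: cvg_cst | exact: yc].
  by apply: cvgB; [exact: cvg_cst | exact: yc].
have y0 : y 0 = x.
  by rewrite /y /p !(mulr0, subr0, mul0r, scale0r, addr0, scale1r) nx invr1 scale1r.
have y1 : y 1 = - x.
  rewrite /y /p subrr mulr0 scale0r addr0 mulr1 (_ : 1 - 2 = -1 :> R); last by lra.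
  by rewrite scaleN1r normrN nx invr1 scale1r.
have nx2 : `|x + x| = 2 by rewrite -mulr2n normrMn nx.
have h0 : h 0 = 2 by rewrite /h y0 subrr normr0 subr0 nx2.
have h1 : h 1 = - 2 by rewrite /h y1 subrr opprK normr0 sub0r nx2.
have [c _ hc0] : exists2 c, c \in `[0, 1] & h c = 0.
  apply: IVT; [lra | exact: continuous_subspaceT | ].
  rewrite h0 h1; apply/andP; split; [rewrite ge_min | rewrite le_max]; apply/orP; [right | left]; lra.
exists (y c); split; last by apply/eqP; rewrite -subr_eq0; apply/eqP.
by rewrite normfZV ?p0.
Qed.

Lemma SP_ge0_of_isosceles x y : `|x| = 1 -> `|y| = 1 ->
  `|x + y| = `|x - y| -> 2 <= `|x + y| ^+ 2 -> 0 <= SP_const X.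
Proof.
move=> nx ny AB A2; have := normD_normB_le_SP x y nx ny.
by rewrite -AB -expr2; nra.
Qed.

Lemma SP_const_ge0 x z : indep2 x z -> 0 <= SP_const X.
Proof.
move=> ind; have x0 := indep2_neq0 x z ind.
pose u := `|x|^-1 *: x; have nu : `|u| = 1 by rewrite normfZV.
have indu : indep2 u z by apply: indep2_scalel ind; rewrite invr_eq0 normr_eq0.
have [y [ny AB]] := exists_isosceles_unit u z nu indu.
have [A2|A2] := lerP 2 (`|u + y| ^+ 2); first exact: SP_ge0_of_isosceles u y nu ny AB A2.
have A1 : 1 <= `|u + y|.
  have : `|u + u| <= `|u + y| + `|u - y|.
    by rewrite [u + u](_ : _ = (u + y) + (u - y)) ?ler_normD // addrACA subrr addr0.
  by rewrite -AB -mulr2n normrMn nu; lra.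
set A := `|u + y| in AB A2 A1.
have A0 : A != 0 by rewrite gt_eqF // (lt_le_trans ltr01).
pose p := A^-1 *: (u + y); pose q := A^-1 *: (u - y).
have np : `|p| = 1 by rewrite normfZV // -normr_eq0.
have nq : `|q| = 1 by rewrite /q AB normfZV // -normr_eq0 -AB.
have npq : `|p + q| = 2 * A^-1.
  rewrite -scalerDr addrACA subrr addr0 normrZ -mulr2n normrMn nu.
  by rewrite ger0_norm ?invr_ge0 ?normr_ge0 // mulrC.
have npq' : `|p - q| = 2 * A^-1.
  rewrite -scalerBr opprB addrC addrA subrK normrZ -mulr2n normrMn ny.
  by rewrite ger0_norm ?invr_ge0 ?normr_ge0 // mulrC.
apply: (SP_ge0_of_isosceles p q np nq); rewrite npq ?npq' //.
have AV : A * A^-1 = 1 by rewrite mulfV.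
nra.
Qed.

Lemma indep2_delta n (f : {linear 'rV[R]_n -> X}) (i j : 'I_n) :
  injective f -> i != j -> indep2 (f (delta_mx 0 i)) (f (delta_mx 0 j)).
Proof.
move=> finj ij a b; rewrite -!linearZ -linearD -(raddf0 f) => /finj /matrixP e.
have := e 0 i; have := e 0 j.
rewrite !mxE !eqxx (negbTE ij) eq_sym (negbTE ij) /=.
by rewrite !mulr1 !mulr0 addr0 add0r => -> ->.
Qed.

End PAngle.

Theorem corollary4p6 (R : realType) (X : completeNormedModType R)
  (n : nat) (hn : (2 <= n)%N) (f : {linear 'rV[R]_n -> X}) (hf : bijective f)
  (t : R) (ht0 : 0 <= t) (ht1 : t <= 1) :
  (gammaX X t + t ^+ 2 - 3) / (2 + 2 * t ^+ 2) <= SP_const X.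
Proof.
pose i0 : 'I_n := Ordinal (ltnW hn); pose i1 : 'I_n := Ordinal hn.
have S0 : 0 <= SP_const X.
  exact: SP_const_ge0 _ _ (indep2_delta _ f i0 i1 (bij_inj hf) isT).
have := gammaX_le_SP t S0 ht0 ht1.
by rewrite ler_pdivrMr; nra.
Qed.
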